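(* Let $(M_N)_{N\ge1}$ be probability measures, $M_N$ on $\mathbb{Y}(N)$, whose Jack generating functions $F_N(\mathbf p;\theta)=\sum_{\lambda\in\mathbb Y}a_{M_N}(\lambda)p_\lambda$ satisfy Assumption A with constant $\varepsilon>0$. Then for every fixed $r\ge1$ and every $N$, the series $$\sum_{i_1,\dots,i_r\ge1}\left|\frac{\partial^r\ln F_N(\mathbf p;\theta)}{\partial p_{i_1}\cdots\partial p_{i_r}}\Big|_{\mathbf p=1^N}\right|\,|x|^{i_1+\dots+i_r}$$ converges absolutely for all complex $x$ with $|x|<1+\varepsilon$.
   Context: Fix $\theta>0$. A Young diagram is a nonincreasing sequence $\lambda=(\lambda_1\ge\lambda_2\ge\dots\ge0)$ of integers with finitely many nonzero parts; $\ell(\lambda)$ is the number of nonzero parts, $|\lambda|=\sum_i\lambda_i$, $\mathbb Y(N)$ is the set of Young diagrams with $\ell(\lambda)\le N$, $\mathbb Y=\bigcup_N\mathbb Y(N)$. Symmetric functions in infinitely many variables $x_1,x_2,\dots$ are identified with $\mathbb R[p_1,p_2,\dots]$, $p_n=\sum_i x_i^n$, $p_\lambda=\prod_i p_{\lambda_i}$. $J_\lambda(\mathbf p;\theta)$ is the Jack symmetric function: the family is orthogonal for $\langle p_\lambda,p_\mu\rangle=\delta_{\lambda\mu}z_\lambda\theta^{-\ell(\lambda)}$ ($z_\lambda=\prod_i i^{m_i}m_i!$, $m_i$ = number of parts equal to $i$), $J_\lambda$ is a combination of monomial symmetric functions $m_\mu$ with $\mu$ below $\lambda$ in dominance order, and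 its leading term is $x_1^{\lambda_1}\cdots x_{\ell(\lambda)}^{\lambda_{\ell(\lambda)}}$. ''$\mathbf p=1^N$'' means $x_1=\dots=x_N=1$, $x_{N+1}=x_{N+2}=\dots=0$, i.e. $p_n=N$ for all $n$; $J_\lambda(1^N;\theta)>0$ for $\lambda\in\mathbb Y(N)$. The Jack generating function of a probability measure $M_N$ on $\mathbb Y(N)$ is $F_N(\mathbf p;\theta)=\sum_{\lambda\in\mathbb Y(N)}M_N(\lambda)J_\lambda(\mathbf p;\theta)/J_\lambda(1^N;\theta)$, expanded as a formal series $\sum_{\lambda\in\mathbb Y}a_{M_N}(\lambda)p_\lambda$; $F_N|_{\mathbf p=1^N}=1$ and $\ln F_N$ is understood as a series around $\mathbf p=1^N$. Assumption A: there is $\varepsilon>0$ such that for every $N$ the series $\sum_{\lambda\in\mathbb Y}|a_{M_N}(\lambda)|N^{\ell(\lambda)}|x|^{|\lambda|}$ converges for all complex $|x|<1+\varepsilon$. *)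

From Stdlib Require Import Reals Lra Lia List Arith.
Import ListNotations.
Open Scope R_scope.

Fixpoint noninc (l : list nat) : Prop :=
  match l with
  | x :: ((y :: _) as t) => (y <= x)%nat /\ noninc t
  | _ => True
  end.

Definition isYD (l : list nat) : Prop := noninc l /\ Forall (fun k => (1 <= k)%nat) l.

Definition ysize (l : list nat) : nat := fold_right Nat.add 0%nat l.
Definition ylen (l : list nat) : nat := length l.

Definition inY (N : nat) (l : list nat) : Prop := isYD l /\ (ylen l <= N)%nat.

Fixpoint parts_aux (fuel n m : nat) : list (list nat) :=
  match n with
  | O => [[]]
  | S _ =>
    match fuel with
    | O => []
    | S f => flat_map (fun k => map (cons k) (parts_aux f (n - k) k))
                      (seq 1 (Nat.min n m))
    end
  end.

Definition parts (n : nat) : list (list nat) := parts_aux n n n.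

Definition lsum {A} (f : A -> R) (s : list A) : R :=
  fold_right (fun x acc => f x + acc) 0 s.
Definition lprod {A} (f : A -> R) (s : list A) : R :=
  fold_right (fun x acc => f x * acc) 1 s.

Definition HasSum {A} (P : A -> Prop) (f : A -> R) (v : R) : Prop :=
  forall eps, 0 < eps -> exists S0 : list A, Forall P S0 /\
    forall S : list A, NoDup S -> Forall P S -> incl S0 S ->
      Rabs (lsum f S - v) < eps.

Definition AbsSummable {A} (P : A -> Prop) (f : A -> R) : Prop :=
  exists B, forall S : list A, NoDup S -> Forall P S -> lsum (fun x => Rabs (f x)) S <= B.

(** number of ways to distribute the parts of nu into the slots of mu so that
    slot i receives total mu_i: this is the coefficient of the monomial
    x_1^{mu_1} ... x_k^{mu_k} in p_nu. *)
Fixpoint xcoef (nu mu : list nat) : nat :=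
  match nu with
  | [] => if forallb (fun k => Nat.eqb k 0) mu then 1%nat else 0%nat
  | v :: vs =>
      fold_right Nat.add 0%nat
        (map (fun i => if Nat.leb v (nth i mu 0%nat)
                       then xcoef vs (firstn i mu ++ (nth i mu 0%nat - v)%nat :: skipn (S i) mu)
                       else 0%nat)
             (seq 0 (length mu)))
  end.

Definition dominated (mu lam : list nat) : Prop :=
  ysize mu = ysize lam /\
  forall k, (ysize (firstn k mu) <= ysize (firstn k lam))%nat.

Definition mult (i : nat) (l : list nat) : nat := count_occ Nat.eq_dec l i.

Definition zee (l : list nat) : R :=
  lprod INR l * lprod (fun i => INR (fact (mult i l))) (seq 1 (ysize l)).

(** [c lam nu] is the coefficient of p_nu in J_lambda(p; theta).
    IsJack theta c : c is the Jack family, characterized as in the paper: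
    J_lambda is a combination of p_nu with |nu| = |lambda| (i.e. homogeneous),
    its expansion in monomials m_mu only involves mu dominated by lambda,
    with coefficient 1 for m_lambda (leading term x^lambda), and the family is
    orthogonal for <p_lambda,p_mu> = delta z_lambda theta^{-ell(lambda)}. *)
Definition IsJack (theta : R) (c : list nat -> list nat -> R) : Prop :=
  forall lam, isYD lam ->
    (forall nu, isYD nu -> ysize nu <> ysize lam -> c lam nu = 0) /\
    (forall mu, isYD mu -> ~ dominated mu lam ->
       lsum (fun nu => c lam nu * INR (xcoef nu mu)) (parts (ysize lam)) = 0) /\
    lsum (fun nu => c lam nu * INR (xcoef nu lam)) (parts (ysize lam)) = 1 /\
    (forall lam', isYD lam' -> lam' <> lam ->
       lsum (fun nu => c lam nu * c lam' nu * zee nu / theta ^ ylen nu)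
            (parts (ysize lam)) = 0).

(** J_lambda(1^N) : p_n = N for all n *)
Definition Jat1 (c : list nat -> list nat -> R) (N : nat) (lam : list nat) : R :=
  lsum (fun nu => c lam nu * INR N ^ ylen nu) (parts (ysize lam)).

(** a_{M_N}(nu): coefficient of p_nu in
    F_N = sum_{lambda in Y(N)} M_N(lambda) J_lambda / J_lambda(1^N).
    Only lambda with |lambda| = |nu| contribute (J_lambda homogeneous). *)
Definition acoef (c : list nat -> list nat -> R) (M : nat -> list nat -> R)
    (N : nat) (nu : list nat) : R :=
  lsum (fun lam => if Nat.leb (ylen lam) N
                   then M N lam * c lam nu / Jat1 c N lam else 0)
       (parts (ysize nu)).

Definition IsProbY (N : nat) (m : list nat -> R) : Prop :=
  (forall lam, inY N lam -> 0 <= m lam) /\ HasSum (inY N) m 1.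

Fixpoint fall (m k : nat) : nat :=
  match k with O => 1%nat | S k' => (m * fall (m - 1) k')%nat end.

(** partial derivative d^{|B|} p_lambda / d p_{B_1} ... d p_{B_s}, evaluated at
    p = 1^N (the multiset B of positive indices). *)
Definition dpow (N : nat) (B lam : list nat) : R :=
  lprod (fun i => INR (fall (mult i lam) (mult i B))) (nodup Nat.eq_dec B)
  * INR N ^ (ylen lam - length B).

(** set partitions of a list (positions), blocks given by their entries *)
Fixpoint ins_each (x : nat) (P : list (list nat)) : list (list (list nat)) :=
  match P with
  | [] => []
  | b :: bs => ((x :: b) :: bs) :: map (cons b) (ins_each x bs)
  end.

Fixpoint setparts (l : list nat) : list (list (list nat)) :=
  match l with
  | [] => [[]]
  | x :: xs => flat_map (fun P => ([x] :: P) :: ins_each x P) (setparts xs)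
  end.

(** Given the values D B of the partial derivatives d^B F at the point
    (D [] = value of F), the partial derivative d^{is} ln F at that point
    (Faa di Bruno formula for the logarithm). *)
Definition logDeriv (D : list nat -> R) (is : list nat) : R :=
  lsum (fun P => (-1) ^ (length P - 1) * INR (fact (length P - 1))
                 * lprod (fun b => D b / D []) P)
       (setparts is).

Definition posIdx (l : list nat) : Prop := Forall (fun i => (1 <= i)%nat) l.

(* Assumption A at a radius T with max(t, 1) < T < 1 + eps controls every
   derivative of F_N at 1^N.  Differentiating p_lam along a multiset B of indices
   produces a factor polynomial in ell(lam) <= |lam| and vanishes unless
   |B| <= |lam|; trading the polynomial for exponential growth at a rate
   rho in (1/T, min(1, 1/t)) gives |d^B F_N(1^N)| <= C rho^|B| for |B| <= r.
   The Faa di Bruno formula writes d^{i_1..i_r} ln F_N as a sum over at most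
   r! set partitions of products of such derivatives divided by F_N(1^N), so
   it is O(rho^(i_1+..+i_r)), and summing (rho t)^(i_1+..+i_r) over r-tuples is
   a product of r geometric series. *)

From Stdlib Require Import Reals List Permutation Arith Classical ClassicalEpsilon Lia Lra.
Import ListNotations.
Open Scope R_scope.

Section FiniteSums.
Context {A : Type}.
Implicit Types (f g : A -> R) (S : list A).

Lemma lsum_ext f g S : (forall x, f x = g x) -> lsum f S = lsum g S.
Proof. intros H; induction S; simpl; congruence. Qed.

Lemma lsum_app f S1 S2 : lsum f (S1 ++ S2) = lsum f S1 + lsum f S2.
Proof. induction S1; simpl; [ring | rewrite IHS1; ring]. Qed.

Lemma lsum_mull c f S : lsum (fun x => c * f x) S = c * lsum f S.
Proof. induction S; simpl; [ring | rewrite IHS; ring]. Qed.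

Lemma lsum_mulr c f S : lsum (fun x => f x * c) S = lsum f S * c.
Proof. induction S; simpl; [ring | rewrite IHS; ring]. Qed.

Lemma lsum_sub f g S : lsum (fun x => f x - g x) S = lsum f S - lsum g S.
Proof. induction S; simpl; [ring | rewrite IHS; ring]. Qed.

Lemma lsum_const c S : lsum (fun _ => c) S = INR (length S) * c.
Proof.
  induction S; cbn [lsum fold_right length]; [simpl; ring | fold (lsum (fun _ => c) S)].
  rewrite IHS, S_INR; ring.
Qed.

Lemma lsum_le f g S : (forall x, In x S -> f x <= g x) -> lsum f S <= lsum g S.
Proof.
  induction S as [|x S IH]; simpl; intros H; [lra|].
  specialize (H x (or_introl eq_refl)) as Hx.
  specialize (IH (fun y Hy => H y (or_intror Hy))). lra.
Qed.

Lemma lsum_nonneg f S : (forall x, In x S -> 0 <= f x) -> 0 <= lsum f S.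
Proof.
  intros H. replace 0 with (lsum (fun _ => 0) S) by (rewrite lsum_const; ring).
  now apply lsum_le.
Qed.

Lemma lsum_abs_le f S : Rabs (lsum f S) <= lsum (fun x => Rabs (f x)) S.
Proof.
  induction S; simpl; [rewrite Rabs_R0; lra|].
  eapply Rle_trans; [apply Rabs_triang | lra].
Qed.

Lemma lsum_le_incl g S1 S : NoDup S1 -> incl S1 S ->
  (forall x, In x S -> 0 <= g x) -> lsum g S1 <= lsum g S.
Proof.
  intros Hnd; revert S; induction Hnd as [|x S1 Hx Hnd IH]; intros S Hinc Hpos.
  - now apply lsum_nonneg.
  - destruct (in_split x S (Hinc x (or_introl eq_refl))) as (l1 & l2 & ->).
    assert (lsum g S1 <= lsum g (l1 ++ l2)).
    { apply IH.
      - intros y Hy. assert (Hy' : In y (l1 ++ x :: l2)) by (apply Hinc; now right).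
        apply in_app_or in Hy'; apply in_or_app.
        destruct Hy' as [|[<-|]]; tauto.
      - intros y Hy; apply Hpos.
        apply in_app_or in Hy; apply in_or_app; simpl; tauto. }
    rewrite lsum_app in *; simpl; lra.
Qed.

Lemma lsum_map {B} f (h : B -> A) (L : list B) :
  lsum f (map h L) = lsum (fun y => f (h y)) L.
Proof. induction L; simpl; congruence. Qed.

Lemma lsum_flat_map {B} f (h : B -> list A) (L : list B) :
  lsum f (flat_map h L) = lsum (fun y => lsum f (h y)) L.
Proof. induction L; simpl; [reflexivity | now rewrite lsum_app, IHL]. Qed.

End FiniteSums.

Section UnconditionalSums.
Context {A : Type}.
Implicit Types (P : A -> Prop) (f g : A -> R) (S : list A).

Definition abs_sum_le P f (Bd : R) : Prop :=
  forall S, NoDup S -> Forall P S -> lsum (fun x => Rabs (f x)) S <= Bd.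

Lemma abs_sum_le_dominated P f g Bd : (forall x, P x -> Rabs (f x) <= g x) ->
  (forall S, NoDup S -> Forall P S -> lsum g S <= Bd) -> abs_sum_le P f Bd.
Proof.
  intros Hfg Hg S Hnd HP. eapply Rle_trans; [|apply (Hg S Hnd HP)].
  apply lsum_le; intros x Hx. rewrite Forall_forall in HP. auto.
Qed.

Lemma has_sum_ext P f g v : (forall x, f x = g x) -> HasSum P f v -> HasSum P g v.
Proof.
  intros Hfg Hf e He. destruct (Hf e He) as (S0 & HS0 & Hclose).
  exists S0; split; [exact HS0|]. intros S Hnd HP Hinc.
  rewrite <- (lsum_ext f g S Hfg). now apply Hclose.
Qed.

Lemma has_sum_sub P f g v w :
  HasSum P f v -> HasSum P g w -> HasSum P (fun x => f x - g x) (v - w).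
Proof.
  intros Hf Hg e He.
  destruct (Hf (e / 2)) as (S1 & HP1 & Hclose1); [lra|].
  destruct (Hg (e / 2)) as (S2 & HP2 & Hclose2); [lra|].
  exists (S1 ++ S2); split; [now apply Forall_app|].
  intros S Hnd HP Hinc. rewrite lsum_sub.
  assert (Hv := Hclose1 S Hnd HP (fun y Hy => Hinc y (in_or_app _ _ _ (or_introl Hy)))).
  assert (Hw := Hclose2 S Hnd HP (fun y Hy => Hinc y (in_or_app _ _ _ (or_intror Hy)))).
  apply Rabs_def2 in Hv, Hw. apply Rabs_def1; lra.
Qed.

(* A nonnegative family sums to the supremum of its finite partial sums. *)
Lemma has_sum_nonneg P g Bd : (forall x, 0 <= g x) ->
  (forall S, NoDup S -> Forall P S -> lsum g S <= Bd) -> exists v, HasSum P g v.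
Proof.
  intros Hg Hbd.
  set (partial := fun y => exists S, NoDup S /\ Forall P S /\ y = lsum g S).
  assert (Hbound : bound partial) by (exists Bd; intros y (S & H1 & H2 & ->); auto).
  assert (Hne : exists y, partial y) by (exists 0, []; repeat constructor).
  destruct (completeness partial Hbound Hne) as [u [Hub Hlub]].
  exists u; intros e He.
  assert (Happrox : exists S1, NoDup S1 /\ Forall P S1 /\ u - e < lsum g S1).
  { apply NNPP; intros Hn.
    assert (u <= u - e); [|lra].
    apply Hlub; intros y (S & H1 & H2 & ->).
    apply Rnot_lt_le; intros Hlt. apply Hn; now exists S. }
  destruct Happrox as (S1 & Hnd1 & HP1 & Hlt).
  exists S1; split; [exact HP1|]. intros S Hnd HP Hinc.
  assert (lsum g S1 <= lsum g S) by (apply lsum_le_incl; auto).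
  assert (lsum g S <= u) by (apply Hub; now exists S).
  apply Rabs_def1; lra.
Qed.

Lemma abs_sum_le_has_sum P f Bd : abs_sum_le P f Bd -> exists v, HasSum P f v.
Proof.
  intros Hbd.
  set (fp := fun x => Rmax (f x) 0). set (fm := fun x => Rmax (- f x) 0).
  assert (Hparts : forall x, 0 <= fp x <= Rabs (f x) /\ 0 <= fm x <= Rabs (f x)
                             /\ f x = fp x - fm x).
  { intros x; unfold fp, fm, Rmax, Rabs.
    repeat destruct Rle_dec; destruct Rcase_abs; lra. }
  assert (Hbd_part : forall h, (forall x, 0 <= h x <= Rabs (f x)) ->
            forall S, NoDup S -> Forall P S -> lsum h S <= Bd).
  { intros h Hh S Hnd HP. eapply Rle_trans; [|apply (Hbd S Hnd HP)].
    apply lsum_le; intros; apply Hh. }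
  destruct (has_sum_nonneg P fp Bd) as [vp Hvp]; [apply Hparts | apply Hbd_part, Hparts|].
  destruct (has_sum_nonneg P fm Bd) as [vm Hvm]; [apply Hparts | apply Hbd_part, Hparts|].
  exists (vp - vm). apply (has_sum_ext P (fun x => fp x - fm x)).
  - intros x; symmetry; apply Hparts.
  - now apply has_sum_sub.
Qed.

Lemma NoDup_cover S0 : exists S, NoDup S /\ incl S0 S /\ incl S S0.
Proof.
  induction S0 as [|x S0 (S & Hnd & Hsub & Hsup)].
  - exists []; repeat split; auto using NoDup_nil, incl_refl.
  - destruct (classic (In x S)) as [Hin|Hout].
    + exists S; repeat split; auto using incl_tl.
      intros y [<-|Hy]; auto.
    + exists (x :: S); split; [now constructor|].
      split; intros y [<-|Hy]; simpl; auto.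
Qed.

Lemma has_sum_abs_le P f v Bd : HasSum P f v -> abs_sum_le P f Bd -> Rabs v <= Bd.
Proof.
  intros Hv Hbd. apply Rle_plus_epsilon; intros e He.
  destruct (Hv e He) as (S0 & HP0 & Hclose).
  destruct (NoDup_cover S0) as (S & Hnd & Hsub & Hsup).
  assert (HP : Forall P S) by (rewrite Forall_forall in *; auto).
  specialize (Hclose S Hnd HP Hsub).
  assert (Rabs (lsum f S) <= Bd)
    by (eapply Rle_trans; [apply lsum_abs_le | apply Hbd; auto]).
  rewrite Rabs_minus_sym in Hclose. pose proof (Rabs_triang_inv v (lsum f S)). lra.
Qed.

(* An unspecified real when [f] has no sum. *)
Definition usum P f : R := epsilon (inhabits 0) (HasSum P f).

Lemma usumP P f Bd : abs_sum_le P f Bd -> HasSum P f (usum P f).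
Proof. intros Hbd. unfold usum; apply epsilon_spec. exact (abs_sum_le_has_sum P f Bd Hbd). Qed.

End UnconditionalSums.

Section FiniteProducts.
Context {A : Type}.
Implicit Types (f g : A -> R) (L : list A).

Lemma lprod_nonneg f L : (forall x, In x L -> 0 <= f x) -> 0 <= lprod f L.
Proof. induction L; simpl; intros H; [lra|]. apply Rmult_le_pos; auto. Qed.

Lemma lprod_le f g L : (forall x, In x L -> 0 <= f x <= g x) -> lprod f L <= lprod g L.
Proof.
  induction L; simpl; intros H; [lra|].
  apply Rmult_le_compat; try apply H; auto. apply lprod_nonneg; intros; apply H; auto.
Qed.

Lemma lprod_le_pow f L X : (forall x, In x L -> 0 <= f x <= X) -> lprod f L <= X ^ length L.
Proof.
  induction L; simpl; intros H; [lra|].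
  apply Rmult_le_compat; try apply H; auto. apply lprod_nonneg; intros; apply H; auto.
Qed.

Lemma lprod_abs f L : Rabs (lprod f L) = lprod (fun x => Rabs (f x)) L.
Proof. induction L; simpl; [apply Rabs_R1 | now rewrite Rabs_mult, IHL]. Qed.

Lemma lprod_neq0 f L x : lprod f L <> 0 -> In x L -> f x <> 0.
Proof.
  induction L; simpl; [tauto|]. intros H [<-|Hx] E.
  - apply H; rewrite E; ring.
  - apply IHL; auto. intros E'; apply H; rewrite E'; ring.
Qed.

End FiniteProducts.

Lemma ysize_app l1 l2 : ysize (l1 ++ l2) = (ysize l1 + ysize l2)%nat.
Proof. induction l1; simpl; auto. unfold ysize in *; simpl; rewrite IHl1; lia. Qed.

Lemma ysize_perm l l' : Permutation l l' -> ysize l = ysize l'.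
Proof. induction 1; unfold ysize in *; simpl; lia. Qed.

Lemma ysize_cons x l : ysize (x :: l) = (x + ysize l)%nat.
Proof. reflexivity. Qed.

Lemma in_le_ysize x l : In x l -> (x <= ysize l)%nat.
Proof.
  induction l; [intros []|].
  intros [->|H]; rewrite ysize_cons; [|specialize (IHl H)]; lia.
Qed.

Lemma length_le_ysize l : Forall (fun k => (1 <= k)%nat) l -> (length l <= ysize l)%nat.
Proof. induction 1; [reflexivity|]. rewrite ysize_cons; simpl; lia. Qed.

Lemma ysize_le_mult B L : (forall i, In i B -> (mult i B <= mult i L)%nat) ->
  (ysize B <= ysize L)%nat.
Proof.
  revert L; induction B as [|x B IH]; intros L H; [unfold ysize; simpl; lia|].
  assert (Hx : In x L).
  { apply (count_occ_In Nat.eq_dec). specialize (H x (or_introl eq_refl)).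
    unfold mult in H; simpl in H. destruct (Nat.eq_dec x x); [lia | congruence]. }
  destruct (in_split x L Hx) as (l1 & l2 & ->).
  assert (ysize B <= ysize (l1 ++ l2))%nat.
  { apply IH. intros i Hi. specialize (H i (or_intror Hi)). unfold mult in *.
    rewrite count_occ_app in *. simpl in H. destruct (Nat.eq_dec x i); lia. }
  rewrite ysize_app in *. rewrite ysize_cons. simpl. lia.
Qed.

Lemma fall_lt m k : (m < k)%nat -> fall m k = 0%nat.
Proof. revert m; induction k; intros m H; [lia|]. simpl. destruct m; [lia|]. rewrite IHk; lia. Qed.

Lemma fall_le_pow m k : (fall m k <= m ^ k)%nat.
Proof.
  revert m; induction k; intros m; simpl; [lia|]. apply Nat.mul_le_mono_l.
  eapply Nat.le_trans; [apply IHk | apply Nat.pow_le_mono_l; lia].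
Qed.

Lemma dpow_nonneg N B lam : 0 <= dpow N B lam.
Proof.
  unfold dpow. apply Rmult_le_pos; [apply lprod_nonneg; intros; apply pos_INR|].
  apply pow_le, pos_INR.
Qed.

Lemma dpow_le N B lam : (1 <= N)%nat ->
  dpow N B lam <= INR N ^ ylen lam * (INR (ylen lam) + 1) ^ (length B * length B).
Proof.
  intros HN. set (X := INR (ylen lam) + 1).
  assert (HX : 1 <= X) by (pose proof (pos_INR (ylen lam)); unfold X; lra).
  assert (Hmult : forall l i, (mult i l <= length l)%nat) by (intros; apply count_occ_bound).
  unfold dpow. rewrite Rmult_comm. apply Rmult_le_compat.
  - apply pow_le, pos_INR.
  - apply lprod_nonneg; intros; apply pos_INR.
  - apply Rle_pow; [apply (le_INR 1); auto | lia].
  - rewrite pow_mult. eapply Rle_trans; [apply lprod_le_pow with (X := X ^ length B)|].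
    + intros i _. split; [apply pos_INR|].
      eapply Rle_trans; [apply le_INR, fall_le_pow|]. rewrite pow_INR.
      apply Rle_trans with (X ^ mult i B); [|apply Rle_pow; auto].
      apply pow_incr; split; [apply pos_INR|].
      apply Rle_trans with (INR (ylen lam)); [apply le_INR, Hmult | unfold X; lra].
    + apply Rle_pow; [now apply pow_R1_Rle|].
      apply NoDup_incl_length; [apply NoDup_nodup|].
      intros x Hx; now apply nodup_In in Hx.
Qed.

Lemma ysize_le_of_dpow_neq0 N B lam : dpow N B lam <> 0 -> (ysize B <= ysize lam)%nat.
Proof.
  unfold dpow. intros H.
  assert (Hprod : lprod (fun i => INR (fall (mult i lam) (mult i B))) (nodup Nat.eq_dec B) <> 0)
    by (intros E; apply H; rewrite E; ring).
  apply ysize_le_mult. intros i Hi.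
  pose proof (lprod_neq0 _ _ i Hprod (proj2 (nodup_In _ _ _) Hi)) as Hi'.
  destruct (le_lt_dec (mult i B) (mult i lam)) as [|Hlt]; auto.
  simpl in Hi'. rewrite fall_lt in Hi' by exact Hlt. simpl in Hi'; lra.
Qed.

Lemma ins_each_spec x P Q : In Q (ins_each x P) ->
  Permutation (concat Q) (x :: concat P) /\
  (Forall (fun b => b <> []) P -> Forall (fun b => b <> []) Q).
Proof.
  revert Q; induction P as [|b bs IH]; simpl; intros Q HQ; [tauto|].
  destruct HQ as [<-|HQ].
  - split; [reflexivity|]. intros H; inversion H; constructor; auto; discriminate.
  - apply in_map_iff in HQ. destruct HQ as (Q' & <- & HQ').
    destruct (IH Q' HQ') as [Hperm Hne]. split.
    + simpl. rewrite Hperm. apply Permutation_sym, Permutation_middle.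
    + intros H; inversion H; constructor; auto.
Qed.

Lemma length_ins_each x P : length (ins_each x P) = length P.
Proof. induction P; simpl; auto. now rewrite length_map, IHP. Qed.

Lemma setparts_spec l P : In P (setparts l) ->
  Permutation (concat P) l /\ Forall (fun b => b <> []) P.
Proof.
  revert P; induction l as [|x xs IH]; simpl; intros P HP.
  - destruct HP as [<-|[]]. simpl; auto.
  - apply in_flat_map in HP. destruct HP as (P' & HP' & HP).
    destruct (IH P' HP') as [Hperm Hne]. destruct HP as [<-|HP].
    + split; [simpl; auto | constructor; auto; discriminate].
    + destruct (ins_each_spec x P' P HP) as [Hperm' Hne']. split; auto.
      rewrite Hperm'. auto.
Qed.

Lemma length_setpart l P : In P (setparts l) -> (length P <= length l)%nat.
Proof.
  intros HP; destruct (setparts_spec l P HP) as [Hperm Hne].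
  rewrite <- (Permutation_length Hperm). clear Hperm HP.
  induction Hne as [|b P Hb _ IH]; simpl; [lia|].
  rewrite length_app. destruct b; [congruence | simpl; lia].
Qed.

Lemma length_setparts l : (length (setparts l) <= fact (length l))%nat.
Proof.
  induction l as [|x xs IH]; simpl; [lia|].
  assert (Hfm : forall L, (forall P, In P L -> (length P <= length xs)%nat) ->
    (length (flat_map (fun P => ([x] :: P) :: ins_each x P) L) <= length L * S (length xs))%nat).
  { induction L as [|P L IHL]; simpl; intros H; [lia|].
    rewrite length_app, length_ins_each. specialize (H P (or_introl eq_refl)) as HP.
    specialize (IHL (fun Q HQ => H Q (or_intror HQ))). lia. }
  eapply Nat.le_trans; [apply Hfm; intros; now apply length_setpart|]. nia.
Qed.

Fixpoint grid (r M : nat) : list (list nat) :=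
  match r with
  | O => [[]]
  | S r' => flat_map (fun h => map (cons h) (grid r' M)) (seq 0 (S M))
  end.

Lemma in_grid M l : Forall (fun x => (x <= M)%nat) l -> In l (grid (length l) M).
Proof.
  induction 1; [now left|]. cbn [length grid]. apply in_flat_map.
  exists x; split; [apply in_seq; lia | now apply in_map].
Qed.

Lemma lsum_grid q r M :
  lsum (fun l => q ^ ysize l) (grid r M) = lsum (fun h => q ^ h) (seq 0 (S M)) ^ r.
Proof.
  induction r; cbn [grid]; [simpl; ring|].
  rewrite lsum_flat_map; cbn [pow]. rewrite <- IHr, <- lsum_mulr.
  apply lsum_ext; intros h. rewrite lsum_map, <- lsum_mull.
  apply lsum_ext; intros l. now rewrite ysize_cons, pow_add.
Qed.

Lemma lsum_geometric_le q n : 0 <= q < 1 -> lsum (fun h => q ^ h) (seq 0 n) <= / (1 - q).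
Proof.
  intros Hq.
  assert (Htel : forall a, lsum (fun h => q ^ h) (seq a n) * (1 - q) = q ^ a - q ^ (a + n)).
  { induction n; intros a; simpl; [rewrite Nat.add_0_r; ring|].
    rewrite Rmult_plus_distr_r, IHn, <- Nat.add_succ_comm. simpl; ring. }
  specialize (Htel 0%nat). simpl in Htel.
  assert (0 <= q ^ n) by (apply pow_le; lra).
  apply Rmult_le_reg_r with (1 - q); [lra|]. rewrite Rinv_l by lra. lra.
Qed.

(* Every list of length [r] lies in a large enough [grid r M]. *)
Lemma lsum_geometric_tuples_le q r S : 0 <= q < 1 -> NoDup S ->
  Forall (fun l => length l = r) S -> lsum (fun l => q ^ ysize l) S <= (/ (1 - q)) ^ r.
Proof.
  intros Hq Hnd Hlen. set (M := ysize (map ysize S)).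
  apply Rle_trans with (lsum (fun l => q ^ ysize l) (grid r M)).
  - apply lsum_le_incl; auto; [|intros; apply pow_le; lra].
    intros l Hl. rewrite Forall_forall in Hlen. rewrite <- (Hlen l Hl).
    apply in_grid, Forall_forall; intros x Hx.
    eapply Nat.le_trans; [apply in_le_ysize, Hx | apply in_le_ysize, in_map, Hl].
  - rewrite lsum_grid. apply pow_incr. split; [|now apply lsum_geometric_le].
    apply lsum_nonneg; intros; apply pow_le; lra.
Qed.

(* From Bernoulli's inequality [1 + n h <= (1 + h) ^ n] with [h = b - 1]. *)
Lemma linear_le_exp b n : 1 < b -> INR n + 1 <= (1 + / (b - 1)) * b ^ n.
Proof.
  intros Hb. set (h := b - 1).
  assert (Hh : 0 < h) by (unfold h; lra).
  pose proof (poly n h Hh) as Hbern. replace (1 + h) with b in Hbern by (unfold h; ring).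
  eapply Rle_trans; [|apply Rmult_le_compat_l; [|exact Hbern]].
  - replace ((1 + / h) * (1 + INR n * h)) with (INR n + 1 + (/ h + INR n * h)) by (field; lra).
    assert (0 < / h) by now apply Rinv_0_lt_compat.
    pose proof (pos_INR n). nra.
  - assert (0 < / h) by now apply Rinv_0_lt_compat. lra.
Qed.

(* Split [b ^ n] as [sqrt b ^ n * sqrt b ^ n]: one factor absorbs [n + 1],
   the other [(n + 1) ^ k]. *)
Lemma poly_le_exp k b : 1 < b -> exists C, 0 <= C /\ forall n, (INR n + 1) ^ k <= C * b ^ n.
Proof.
  revert b; induction k as [|k IH]; intros b Hb.
  - exists 1; split; [lra|]. intros n; simpl. rewrite Rmult_1_l. apply pow_R1_Rle; lra.
  - set (c := sqrt b).
    assert (Hc : 1 < c) by (unfold c; rewrite <- sqrt_1; apply sqrt_lt_1; lra).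
    assert (Hcc : b = c * c) by (unfold c; rewrite sqrt_sqrt; lra).
    destruct (IH c Hc) as (C & HC & Hpoly).
    set (C1 := 1 + / (c - 1)).
    assert (HC1 : 0 <= C1) by (unfold C1; pose proof (Rinv_0_lt_compat (c - 1)); lra).
    exists (C1 * C); split; [now apply Rmult_le_pos|]. intros n. simpl.
    rewrite Hcc, Rpow_mult_distr.
    replace (C1 * C * (c ^ n * c ^ n)) with ((C1 * c ^ n) * (C * c ^ n)) by ring.
    pose proof (pos_INR n).
    apply Rmult_le_compat; [lra | apply pow_le; lra | now apply linear_le_exp | apply Hpoly].
Qed.

(* Because [|B| <= |lam|] whenever [dpow N B lam <> 0], the polynomial growth
   of [dpow] in [ylen lam <= ysize lam] can be traded for a factor [rho ^ ysize B]. *)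
Lemma dpow_le_geometric N B lam k C T rho :
  (1 <= N)%nat -> isYD lam -> 0 < rho <= 1 -> 0 <= T -> 0 <= C ->
  (forall n, (INR n + 1) ^ k <= C * (T * rho) ^ n) -> (length B * length B <= k)%nat ->
  dpow N B lam <= C * rho ^ ysize B * (INR N ^ ylen lam * T ^ ysize lam).
Proof.
  intros HN Hlam Hrho HT HC Hpoly Hk.
  assert (HNl : 0 <= INR N ^ ylen lam) by apply pow_le, pos_INR.
  assert (HTl : 0 <= T ^ ysize lam) by now apply pow_le.
  assert (HrB : 0 <= rho ^ ysize B) by (apply pow_le; lra).
  destruct (Req_dec (dpow N B lam) 0) as [E|E].
  { rewrite E. repeat apply Rmult_le_pos; auto. }
  assert (Hsize := ysize_le_of_dpow_neq0 N B lam E).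
  assert (Hlen := length_le_ysize lam (proj2 Hlam)). unfold ylen in *.
  eapply Rle_trans; [apply dpow_le; auto|]. unfold ylen.
  replace (C * rho ^ ysize B * (INR N ^ length lam * T ^ ysize lam))
    with (INR N ^ length lam * (C * (T ^ ysize lam * rho ^ ysize B))) by ring.
  apply Rmult_le_compat_l; auto.
  apply Rle_trans with ((INR (ysize lam) + 1) ^ k).
  { apply Rle_trans with ((INR (ysize lam) + 1) ^ (length B * length B)).
    - apply pow_incr; split; [pose proof (pos_INR (length lam)); lra|].
      apply Rplus_le_compat_r, le_INR, Hlen.
    - apply Rle_pow; auto. pose proof (pos_INR (ysize lam)); lra. }
  eapply Rle_trans; [apply Hpoly|]. rewrite Rpow_mult_distr.
  apply Rmult_le_compat_l; auto. apply Rmult_le_compat_l; auto.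
  replace (ysize lam) with (ysize B + (ysize lam - ysize B))%nat by lia.
  rewrite pow_add. rewrite <- (Rmult_1_r (rho ^ ysize B)) at 2.
  apply Rmult_le_compat_l; auto.
  rewrite <- (pow1 (ysize lam - ysize B)). apply pow_incr; lra.
Qed.

Section DerivativesAtOne.
Variables (a : list nat -> R) (N : nat) (T G : R).
Hypothesis HN : (1 <= N)%nat.
Hypothesis HT : 0 <= T.
Hypothesis HG :
  abs_sum_le isYD (fun lam => Rabs (a lam) * INR N ^ ylen lam * T ^ ysize lam) G.

Definition deriv_at_one (B : list nat) : R := usum isYD (fun lam => a lam * dpow N B lam).

Lemma abs_sum_le_dpow B k C rho : 0 < rho <= 1 -> 0 <= C ->
  (forall n, (INR n + 1) ^ k <= C * (T * rho) ^ n) -> (length B * length B <= k)%nat ->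
  abs_sum_le isYD (fun lam => a lam * dpow N B lam) (C * rho ^ ysize B * G).
Proof.
  intros Hrho HC Hpoly Hk S Hnd HP.
  assert (HCr : 0 <= C * rho ^ ysize B) by (apply Rmult_le_pos; [|apply pow_le]; lra).
  eapply Rle_trans; [|apply Rmult_le_compat_l, (HG S Hnd HP); exact HCr].
  rewrite <- lsum_mull. apply lsum_le; intros lam Hlam.
  rewrite Forall_forall in HP. specialize (HP lam Hlam).
  assert (0 <= INR N ^ ylen lam * T ^ ysize lam)
    by (apply Rmult_le_pos; apply pow_le; auto using pos_INR).
  rewrite Rabs_mult, (Rabs_pos_eq (dpow _ _ _)) by apply dpow_nonneg.
  rewrite (Rabs_pos_eq (_ * _ * _))
    by (rewrite Rmult_assoc; apply Rmult_le_pos; auto using Rabs_pos).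
  eapply Rle_trans; [apply Rmult_le_compat_l; [apply Rabs_pos|];
                     apply (dpow_le_geometric N B lam k C T rho); auto|].
  right; ring.
Qed.

Lemma has_sum_deriv_at_one B : 1 < T ->
  HasSum isYD (fun lam => a lam * dpow N B lam) (deriv_at_one B).
Proof.
  intros HT1. destruct (poly_le_exp (length B * length B) T HT1) as (C & HC & Hpoly).
  apply (usumP _ _ (C * 1 ^ ysize B * G)), (abs_sum_le_dpow B (length B * length B) C 1);
    auto; [lra|].
  intros n; rewrite Rmult_1_r; apply Hpoly.
Qed.

Lemma deriv_at_one_abs_le B k C rho : 0 < rho <= 1 -> 0 <= C ->
  (forall n, (INR n + 1) ^ k <= C * (T * rho) ^ n) -> (length B * length B <= k)%nat ->
  Rabs (deriv_at_one B) <= C * rho ^ ysize B * G.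
Proof.
  intros Hrho HC Hpoly Hk.
  assert (Hbd := abs_sum_le_dpow B k C rho Hrho HC Hpoly Hk).
  exact (has_sum_abs_le _ _ _ _ (usumP _ _ _ Hbd) Hbd).
Qed.

Lemma deriv_at_one_ratio_le r C rho b : 0 < rho <= 1 -> 0 <= C ->
  (forall n, (INR n + 1) ^ (r * r) <= C * (T * rho) ^ n) -> (length b <= r)%nat ->
  Rabs (deriv_at_one b / deriv_at_one []) <=
    Rmax 1 (C * G * Rabs (/ deriv_at_one [])) * rho ^ ysize b.
Proof.
  intros Hrho HC Hpoly Hb. unfold Rdiv. rewrite Rabs_mult.
  assert (HDb : Rabs (deriv_at_one b) <= C * rho ^ ysize b * G)
    by (apply deriv_at_one_abs_le with (k := (r * r)%nat); auto; nia).
  eapply Rle_trans; [apply Rmult_le_compat_r; [apply Rabs_pos | exact HDb]|].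
  replace (C * rho ^ ysize b * G * Rabs (/ deriv_at_one []))
    with (C * G * Rabs (/ deriv_at_one []) * rho ^ ysize b) by ring.
  apply Rmult_le_compat_r; [apply pow_le; lra | apply Rmax_r].
Qed.

End DerivativesAtOne.

Lemma lprod_mul_pow_ysize E rho (P : list (list nat)) :
  lprod (fun b => E * rho ^ ysize b) P = E ^ length P * rho ^ ysize (concat P).
Proof. induction P; simpl; [ring|]. rewrite IHP, ysize_app, pow_add; ring. Qed.

Section LogDerivative.
Variables (D : list nat -> R) (E rho : R).
Hypotheses (HE : 1 <= E) (Hrho : 0 <= rho).

Lemma setpart_prod_abs_le is P :
  (forall b, (length b <= length is)%nat -> Rabs (D b / D []) <= E * rho ^ ysize b) ->
  In P (setparts is) ->
  Rabs (lprod (fun b => D b / D []) P) <= E ^ length is * rho ^ ysize is.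
Proof.
  intros Hratio HP. destruct (setparts_spec is P HP) as [Hperm _].
  rewrite lprod_abs.
  eapply Rle_trans; [apply lprod_le with (g := fun b => E * rho ^ ysize b)|].
  - intros b Hb. split; [apply Rabs_pos|]. apply Hratio.
    rewrite <- (Permutation_length Hperm).
    destruct (in_split b P Hb) as (l1 & l2 & ->).
    rewrite concat_app, !length_app; simpl; rewrite length_app; lia.
  - rewrite lprod_mul_pow_ysize, (ysize_perm _ _ Hperm).
    apply Rmult_le_compat_r; [now apply pow_le|].
    apply Rle_pow; [exact HE | now apply length_setpart].
Qed.

Lemma logDeriv_abs_le is :
  (forall b, (length b <= length is)%nat -> Rabs (D b / D []) <= E * rho ^ ysize b) ->
  Rabs (logDeriv D is) <= INR (fact (length is)) ^ 2 * E ^ length is * rho ^ ysize is.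
Proof.
  intros Hratio. set (r := length is).
  assert (Hbound : 0 <= E ^ r * rho ^ ysize is)
    by (apply Rmult_le_pos; apply pow_le; lra).
  unfold logDeriv. eapply Rle_trans; [apply lsum_abs_le|].
  eapply Rle_trans;
    [apply lsum_le with (g := fun _ => INR (fact r) * (E ^ r * rho ^ ysize is))|].
  - intros P HP.
    rewrite !Rabs_mult, pow_1_abs, Rmult_1_l, Rabs_pos_eq by apply pos_INR.
    apply Rmult_le_compat; [apply pos_INR | apply Rabs_pos | |].
    + apply le_INR, fact_le. pose proof (length_setpart is P HP). unfold r. lia.
    + now apply setpart_prod_abs_le.
  - rewrite lsum_const. replace (INR (fact r) ^ 2 * E ^ r * rho ^ ysize is)
      with (INR (fact r) * (INR (fact r) * (E ^ r * rho ^ ysize is))) by ring.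
    apply Rmult_le_compat_r; [apply Rmult_le_pos; [apply pos_INR | exact Hbound]|].
    apply le_INR, length_setparts.
Qed.

End LogDerivative.

Lemma exists_scales t eps : 0 < eps -> 0 <= t < 1 + eps ->
  exists T rho, 1 < T < 1 + eps /\ 0 < rho <= 1 /\ 1 < T * rho /\ 0 <= t * rho < 1.
Proof.
  intros Heps Ht. set (t1 := Rmax t 1).
  assert (Ht1 : 1 <= t1 /\ t <= t1 /\ t1 < 1 + eps)
    by (unfold t1, Rmax; destruct Rle_dec; lra).
  set (s := (2 * t1 + (1 + eps)) / 3).
  assert (Hs : t1 < s) by (unfold s; lra).
  assert (Hs_inv : s * / s = 1) by (field; lra).
  assert (Hrho : 0 < / s) by (apply Rinv_0_lt_compat; lra).
  set (T := (t1 + 2 * (1 + eps)) / 3).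
  assert (HsT : s < T) by (unfold s, T; lra).
  exists T, (/ s). repeat split; try (unfold T; lra).
  - rewrite <- Rinv_1. apply Rinv_le_contravar; lra.
  - rewrite <- Hs_inv. now apply Rmult_lt_compat_r.
  - apply Rmult_le_pos; lra.
  - rewrite <- Hs_inv. apply Rle_lt_trans with (t1 * / s).
    + apply Rmult_le_compat_r; lra.
    + apply Rmult_lt_compat_r; lra.
Qed.

Theorem proposition2p1 :
  forall (theta : R) (c : list nat -> list nat -> R)
         (M : nat -> list nat -> R) (eps : R),
    0 < theta ->
    IsJack theta c ->
    (forall N, (1 <= N)%nat -> IsProbY N (M N)) ->
    0 < eps ->
    (* Assumption A, for complex x with |x| = t *)
    (forall N, (1 <= N)%nat -> forall t, 0 <= t < 1 + eps ->
       AbsSummable isYD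
         (fun lam => Rabs (acoef c M N lam) * INR N ^ ylen lam * t ^ ysize lam)) ->
    forall (r N : nat), (1 <= r)%nat -> (1 <= N)%nat ->
    forall t, 0 <= t < 1 + eps ->
    exists D : list nat -> R,
      (* D B = d^{|B|} F_N / d p_{B_1} ... d p_{B_s} at p = 1^N *)
      (forall B, posIdx B ->
         HasSum isYD (fun lam => acoef c M N lam * dpow N B lam) (D B)) /\
      AbsSummable (fun is => length is = r /\ posIdx is)
        (fun is => Rabs (logDeriv D is) * t ^ fold_right Nat.add 0%nat is).
Proof.
  intros theta c M eps _ _ _ Heps HA r N _ HN t Ht.
  destruct (exists_scales t eps Heps Ht) as (T & rho & HT & Hrho & HTrho & Htrho).
  destruct (HA N HN T ltac:(lra)) as [G HG].
  set (D := deriv_at_one (acoef c M N) N).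
  exists D; split; [intros B _; apply (has_sum_deriv_at_one _ N T G); auto; lra|].
  destruct (poly_le_exp (r * r) (T * rho) HTrho) as (C & HC & Hpoly).
  set (E := Rmax 1 (C * G * Rabs (/ D []))).
  assert (HE : 1 <= E) by apply Rmax_l.
  set (K := INR (fact r) ^ 2 * E ^ r).
  exists (K * (/ (1 - t * rho)) ^ r).
  apply abs_sum_le_dominated with (g := fun is => K * (t * rho) ^ ysize is).
  - intros is [Hlen _]. change (fold_right Nat.add 0%nat is) with (ysize is).
    rewrite Rabs_pos_eq by (apply Rmult_le_pos; [apply Rabs_pos | apply pow_le; lra]).
    rewrite Rpow_mult_distr.
    replace (K * (t ^ ysize is * rho ^ ysize is)) with (K * rho ^ ysize is * t ^ ysize is)
      by ring.
    apply Rmult_le_compat_r; [apply pow_le; lra|]. unfold K; rewrite <- Hlen.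
    apply logDeriv_abs_le; [exact HE | lra | intros b Hb].
    apply deriv_at_one_ratio_le with (T := T) (G := G) (r := r) (C := C); auto; [lra | lia].
  - intros S Hnd HP. rewrite lsum_mull.
    apply Rmult_le_compat_l; [apply Rmult_le_pos; apply pow_le; [apply pos_INR | lra]|].
    apply lsum_geometric_tuples_le; auto.
    rewrite Forall_forall in *; intros; now apply HP.
Qed.
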